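(* Let $S$ be a semigroup with apartness and $A\subset S$ a co-ideal. Define $\kappa_A$ on $S$ by $x\kappa_A y\Leftrightarrow (x\#y)\wedge(x\in A\vee y\in A)$, and let $\rho_{\neg A}=\{(x,y)\mid x=y\vee(x\in\neg A\wedge y\in\neg A)\}$ where $\neg A=\{x\mid x\notin A\}$. Then: (1) $\neg A=\tilde A$ and this is an ideal of $S$; (2) $\kappa_A$ is a co-congruence on $S$; (3) $\rho_{\neg A}\subset\neg\kappa_A$. Consequently $(S/\rho_{\neg A},\kappa_A)$ is a semigroup with apartness.
   Context: Constructive (intuitionistic) mathematics. A semigroup with apartness is a semigroup with an apartness relation $\#$ (irreflexive, symmetric, cotransitive: $x\#z\Rightarrow(x\#y\vee y\#z)$) such that $xy\#zw\Rightarrow(x\#z\vee y\#w)$. A subset $A$ is strongly extensional if $a\in A\Rightarrow(x\in A\vee x\#a)$; it is a co-ideal if strongly extensional and convex, i.e. $ab\in A\Rightarrow(a\in A\wedge b\in A)$. $\tilde A=\{x\mid\forall_{a\in A}x\#a\}$. A co-congruence is a relation $\kappa$ with $\kappa\subset\#$, symmetric, cotransitive, and with $(ax)\kappa(by)\Rightarrow(a\kappa b\vee x\kappa y)$. $S/\rho$ denotes $S$ with equality $\rho$. *)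

Set Implicit Arguments.

Section Defs.
Variable T : Type.

(* A semigroup with apartness, for an arbitrary equality relation [eq]
   (so that "S/rho", i.e. S with equality rho, can be expressed). *)
Record IsSemigroupApart (eq ap : T -> T -> Prop) (mul : T -> T -> T) : Prop := {
  sa_eq_refl  : forall x, eq x x;
  sa_eq_sym   : forall x y, eq x y -> eq y x;
  sa_eq_trans : forall x y z, eq x y -> eq y z -> eq x z;
  sa_mul_ext  : forall x y x' y', eq x x' -> eq y y' -> eq (mul x y) (mul x' y');
  sa_assoc    : forall x y z, eq (mul (mul x y) z) (mul x (mul y z));
  sa_irrefl   : forall x y, eq x y -> ~ ap x y;
  sa_sym      : forall x y, ap x y -> ap y x;
  sa_cotrans  : forall x y z, ap x z -> ap x y \/ ap y z;
  sa_strext   : forall x y z w, ap (mul x y) (mul z w) -> ap x z \/ ap y w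
}.

Variable ap : T -> T -> Prop.
Variable mul : T -> T -> T.

Definition strongly_extensional (A : T -> Prop) : Prop :=
  forall a x, A a -> A x \/ ap x a.

Definition convex (A : T -> Prop) : Prop :=
  forall a b, A (mul a b) -> A a /\ A b.

Definition co_ideal (A : T -> Prop) : Prop :=
  strongly_extensional A /\ convex A.

Definition ideal (I : T -> Prop) : Prop :=
  forall x y, I x -> I (mul x y) /\ I (mul y x).

Definition compl (A : T -> Prop) : T -> Prop := fun x => ~ A x.

Definition tilde (A : T -> Prop) : T -> Prop := fun x => forall a, A a -> ap x a.

Definition co_congruence (k : T -> T -> Prop) : Prop :=
  (forall x y, k x y -> ap x y) /\
  (forall x y, k x y -> k y x) /\
  (forall x y z, k x z -> k x y \/ k y z) /\
  (forall a x b y, k (mul a x) (mul b y) -> k a b \/ k x y).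

Definition kappa (A : T -> Prop) : T -> T -> Prop :=
  fun x y => ap x y /\ (A x \/ A y).

Definition rho_compl (A : T -> Prop) : T -> T -> Prop :=
  fun x y => x = y \/ (compl A x /\ compl A y).

End Defs.


Set Implicit Arguments.

(* Everything is intuitionistic and elementary; the work is to
   see which property of the apartness and of the co-ideal A each claim uses.
   - Strong extensionality of A turns "x is not in A" into "x is apart from
     every element of A", and irreflexivity gives the converse: compl A is
     the set tilde A.  Convexity of A makes compl A a two-sided ideal.
   - kappa_A is contained in the apartness; it is symmetric by symmetry of #,
     cotransitive by cotransitivity of # combined with strong extensionality
     of A, and strongly extensional for the product by the corresponding
     property of # combined with convexity of A.
   - rho_(not A) relates only equal elements or two elements outside A, and
     kappa_A requires an element of A and two apart elements, so the two
     relations are disjoint.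
   - rho_(not A) is an equivalence for any A, compatible with the product as
     soon as compl A is an ideal; together with the co-congruence and the
     disjointness this makes (S/rho_(not A), kappa_A) a semigroup with
     apartness. *)

Section CoIdealQuotient.

Variable T : Type.
Variable ap : T -> T -> Prop.
Variable mul : T -> T -> T.

Hypothesis ap_irrefl : forall x, ~ ap x x.
Hypothesis ap_sym : forall x y, ap x y -> ap y x.
Hypothesis ap_cotrans : forall x y z, ap x z -> ap x y \/ ap y z.
Hypothesis ap_strext :
  forall x y z w, ap (mul x y) (mul z w) -> ap x z \/ ap y w.

Variable A : T -> Prop.

Lemma compl_iff_tilde :
  strongly_extensional ap A -> forall x, compl A x <-> tilde ap A x.
Proof.
  intros HA x; split.
  - intros Hx a Ha.
    destruct (HA a x Ha) as [Ax | Hxa]; [contradiction | exact Hxa].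
  - intros Hx Ax; exact (ap_irrefl (Hx x Ax)).
Qed.

Lemma compl_ideal : convex mul A -> ideal mul (compl A).
Proof.
  intros HA x y Hx; split; intros Hxy; apply Hx; apply (HA _ _ Hxy).
Qed.

Lemma kappa_sub_ap : forall x y, kappa ap A x y -> ap x y.
Proof. intros x y [Hxy _]; exact Hxy. Qed.

Lemma kappa_sym : forall x y, kappa ap A x y -> kappa ap A y x.
Proof. intros x y [Hxy HA]; split; [exact (ap_sym Hxy) | tauto]. Qed.

(* Whichever of x, z lies in A, strong extensionality decides on which side
   of the cotransitivity split the point y carries the membership in A. *)
Lemma kappa_cotrans :
  strongly_extensional ap A ->
  forall x y z, kappa ap A x z -> kappa ap A x y \/ kappa ap A y z.
Proof.
  intros HA x y z [Hxz [Ax | Az]].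
  - destruct (ap_cotrans y Hxz) as [Hxy | Hyz].
    + left; split; auto.
    + destruct (HA x y Ax) as [Ay | Hyx].
      * right; split; auto.
      * left; split; auto.
  - destruct (ap_cotrans y Hxz) as [Hxy | Hyz].
    + destruct (HA z y Az) as [Ay | Hyz].
      * left; split; auto.
      * right; split; auto.
    + right; split; auto.
Qed.

(* Convexity pushes membership of a product in A down to both factors. *)
Lemma kappa_strext :
  convex mul A ->
  forall a x b y,
    kappa ap A (mul a x) (mul b y) -> kappa ap A a b \/ kappa ap A x y.
Proof.
  intros HA a x b y [Hab HAab].
  assert (Hfactors : (A a /\ A x) \/ (A b /\ A y)).
  { destruct HAab as [H | H]; [left | right]; exact (HA _ _ H). }
  destruct (ap_strext Hab) as [H | H]; [left | right]; split; tauto.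
Qed.

Lemma kappa_co_congruence :
  co_ideal ap mul A -> co_congruence ap mul (kappa ap A).
Proof.
  intros [HAse HAcv]; split; [| split; [| split]].
  - exact kappa_sub_ap.
  - exact kappa_sym.
  - exact (kappa_cotrans HAse).
  - exact (kappa_strext HAcv).
Qed.

Lemma rho_compl_not_kappa :
  forall x y, rho_compl A x y -> ~ kappa ap A x y.
Proof.
  intros x y [<- | [Hx Hy]] [Hxy HA].
  - exact (ap_irrefl Hxy).
  - destruct HA as [Ax | Ay]; [exact (Hx Ax) | exact (Hy Ay)].
Qed.

Lemma rho_compl_refl : forall x, rho_compl A x x.
Proof. intros x; left; reflexivity. Qed.

Lemma rho_compl_sym : forall x y, rho_compl A x y -> rho_compl A y x.
Proof. intros x y [<- | [Hx Hy]]; [left; reflexivity | right; tauto]. Qed.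

Lemma rho_compl_trans :
  forall x y z, rho_compl A x y -> rho_compl A y z -> rho_compl A x z.
Proof.
  intros x y z [<- | [Hx Hy]] [<- | [Hy' Hz]];
    solve [left; reflexivity | right; tauto].
Qed.

(* If one factor changes, the products both leave A because compl A is an
   ideal; if no factor changes, the products are equal. *)
Lemma rho_compl_mul :
  ideal mul (compl A) ->
  forall x y x' y', rho_compl A x x' -> rho_compl A y y' ->
    rho_compl A (mul x y) (mul x' y').
Proof.
  intros HI x y x' y' [<- | [Hx Hx']] Hyy'.
  - destruct Hyy' as [<- | [Hy Hy']].
    + left; reflexivity.
    + right; split; [exact (proj2 (HI _ x Hy)) | exact (proj2 (HI _ x Hy'))].
  - right; split; [exact (proj1 (HI _ y Hx)) | exact (proj1 (HI _ y' Hx'))].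
Qed.

End CoIdealQuotient.

Theorem mainTheorem12 (T : Type) (ap : T -> T -> Prop) (mul : T -> T -> T)
  (HS : IsSemigroupApart (@eq T) ap mul)
  (A : T -> Prop) (HA : co_ideal ap mul A) :
  ((forall x, compl A x <-> tilde ap A x) /\ ideal mul (compl A)) /\
  co_congruence ap mul (kappa ap A) /\
  (forall x y, rho_compl A x y -> ~ kappa ap A x y) /\
  IsSemigroupApart (rho_compl A) (kappa ap A) mul.
Proof.
  assert (ap_irrefl : forall x, ~ ap x x).
  { intros x; exact (sa_irrefl HS x x eq_refl). }
  pose proof HA as [HAse HAcv].
  pose proof (compl_ideal HAcv) as Hideal.
  pose proof (kappa_co_congruence (sa_sym HS) (sa_cotrans HS) (sa_strext HS) HA)
    as Hkappa.
  pose proof (rho_compl_not_kappa ap_irrefl (A := A)) as Hdisjoint.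
  split; [split | split; [exact Hkappa | split; [exact Hdisjoint |]]].
  - exact (compl_iff_tilde ap_irrefl HAse).
  - exact Hideal.
  - destruct Hkappa as [_ [Hsym [Hcotrans Hstrext]]].
    constructor.
    + exact (@rho_compl_refl T A).
    + exact (@rho_compl_sym T A).
    + exact (@rho_compl_trans T A).
    + exact (rho_compl_mul Hideal).
    + intros x y z; left; exact (sa_assoc HS x y z).
    + exact Hdisjoint.
    + exact Hsym.
    + exact Hcotrans.
    + exact Hstrext.
Qed.
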